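(* Let $h \ge 2$ and $k \ge 3$ be integers, let $b$ be an integer, and let $A = [0,k-2] \cup \{b\}$. If $b > h(k-2)$, then \[ |hA| = (h+1)\left(1 + \frac{h(k-2)}{2}\right). \] If $b \in [k-1, h(k-2)]$, then there exist unique integers $i_0 \in [0,h-2]$ and $r \in [0,k-3]$ such that $b = (h-i_0)(k-2) - r$, and \[ |hA| = (i_0+1)b + (h-i_0)(h(k-2)+1) - \frac{(h+i_0+1)(h-i_0)(k-2)}{2}. \]
   Context: For real $u,v$, $[u,v] = \{n \in \mathbf{Z} : u \le n \le v\}$. For a positive integer $h$ and a finite set $A$ of integers, $hA$ denotes the set of all sums $a_1+\cdots+a_h$ with $a_1,\ldots,a_h \in A$ (not necessarily distinct). *)

From HB Require Import structures.
From mathcomp Require Import all_boot all_order all_algebra.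
From mathcomp Require Import finmap.
Set Implicit Arguments. Unset Strict Implicit. Unset Printing Implicit Defensive.
Import Order.TTheory GRing.Theory Num.Theory.
Local Open Scope fset_scope.
Local Open Scope ring_scope.

Fixpoint hsumset (h : nat) (A : {fset int}) : {fset int} :=
  match h with
  | 0%N => [fset (0 : int)]
  | h'.+1 => [fset (a + x) | a in A, x in hsumset h' A]
  end.

Definition zinterval0 (m : nat) : {fset int} := [fset (i%:Z) | i in iota 0 m.+1].

From HB Require Import structures.
From mathcomp Require Import all_boot all_order all_algebra.
From mathcomp Require Import finmap zify ring lra.
Set Implicit Arguments. Unset Strict Implicit. Unset Printing Implicit Defensive.
Import Order.TTheory GRing.Theory Num.Theory.
Local Open Scope fset_scope.
Local Open Scope ring_scope.

(* Write [m = k - 2].  For [m <= b], an element of [hA] is [j b + t] with [j <= h] and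
   [t <= (h - j) m].  Below [b] only [j = 0] contributes, giving [[0, min(b - 1, h m)]],
   and the part of [hA] at or above [b] is [b + (h - 1)A]; hence
   [|hA| = sum_(i <= h) min(b, i m + 1)].  If [q] is the largest index with [q m < b],
   the terms with [i <= q] are [i m + 1] and the others are [b]; the first case of the
   theorem is [q = h], the second one [q = h - i0 - 1], where [b = (q + 1) m - r]. *)

Lemma mem_zinterval0 (m : nat) (a : int) :
  a \in zinterval0 m <-> exists2 t : nat, (t <= m)%N & a = t%:Z.
Proof.
split=> [/imfsetP [t + ->]|[t tm ->]]; first by rewrite mem_iota => tm; exists t.
by apply/imfsetP; exists t; rewrite // mem_iota.
Qed.

Lemma mem_hsumset (h m : nat) (b x : int) :
  x \in hsumset h (zinterval0 m `|` [fset b]) <->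
  exists j t : nat, [/\ (j <= h)%N, (t <= (h - j) * m)%N & x = j%:Z * b + t%:Z].
Proof.
elim: h x => [|h IH] x /=.
  rewrite in_fset1; split=> [/eqP ->|[j [t [+ + ->]]]]; first by exists 0%N, 0%N; rewrite mul0r.
  by rewrite leqn0 => /eqP ->; rewrite sub0n mul0n leqn0 => /eqP ->; rewrite mul0r.
split.
  case/imfset2P => a /= + [y /= /IH [j [t [jh tj ->]]] ->].
  rewrite in_fsetU in_fset1 => /orP[/mem_zinterval0 [s sm ->]|/eqP ->].
    exists j, (s + t)%N; split; [lia | | by rewrite PoszD; ring].
    by rewrite subSn // mulSn leq_add.
  by exists j.+1, t; split; rewrite // -addn1 PoszD; ring.
case=> j [t [jh tj ->]]; apply/imfset2P.
have [jlt|jge] := ltnP j h.+1; last first.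
  move: tj; have /eqP -> : j == h.+1 by rewrite eqn_leq jh jge.
  rewrite subnn mul0n leqn0 => /eqP ->.
  exists b; first by rewrite in_fsetU in_fset1 eqxx orbT.
  exists (h%:Z * b); first by apply/IH; exists h, 0%N; rewrite subnn addr0.
  by rewrite /= -addn1 PoszD; ring.
pose s := minn t m.
exists s%:Z; first by rewrite in_fsetU; apply/orP; left; apply/mem_zinterval0; exists s; rewrite ?geq_minr.
exists (j%:Z * b + (t - s)%N%:Z).
  apply/IH; exists j, (t - s)%N; split => //; move: tj.
  by rewrite /s subSn // mulSn; move: ((h - j) * m)%N => n; lia.
by rewrite addrCA -PoszD subnKC ?geq_minl.
Qed.

Lemma count_leq_iota n c : count (fun x => x <= c)%N (iota 0 n) = minn n c.+1.
Proof. by elim: n => // n IH; rewrite -addn1 iotaD count_cat IH /=; case: leqP; lia. Qed.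

Section CountHsumset.

Variables m B : nat.
Hypotheses (m_le_B : (m <= B)%N) (B_gt0 : (0 < B)%N).

Let hA h := hsumset h (zinterval0 m `|` [fset B%:Z]).

Lemma card_hsumset_count h :
  #|` hA h| = count (fun x => x%:Z \in hA h) (iota 0 (h * B).+1).
Proof.
have {1}-> : hA h = [fset x%:Z | x in [seq x <- iota 0 (h * B).+1 | x%:Z \in hA h]].
  apply/fsetP => x; apply/idP/imfsetP => [xA|[y + ->]]; last by rewrite mem_filter => /andP[].
  have /mem_hsumset [j [t [jh tj xE]]] := xA.
  have tB : (t <= (h - j) * B)%N by apply: leq_trans tj _; rewrite leq_mul2l m_le_B orbT.
  exists (j * B + t)%N; last by rewrite xE PoszD PoszM.
  rewrite mem_filter mem_iota PoszD PoszM -xE xA /=.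
  by rewrite add0n ltnS (leq_trans (leq_add (leqnn _) tB)) // -mulnDl subnKC.
rewrite card_imfset; last by move=> x y [].
have := filter_uniq (fun x : nat => x%:Z \in hA h) (iota_uniq 0 (h * B).+1).
by rewrite -size_filter; move: (filter _ _) => s s_uniq /=; rewrite undup_id.
Qed.

Lemma mem_hsumsetS_lt h x : (x < B)%N -> (x%:Z \in hA h.+1) = (x <= h.+1 * m)%N.
Proof.
move=> xB; apply/idP/idP => [/mem_hsumset [j [t [jh tj]]]|xm].
  rewrite -PoszM -PoszD => -[xE]; case: j xE jh tj => [|j] xE; first by rewrite xE subn0.
  by move: xB; rewrite xE mulSn; lia.
by apply/mem_hsumset; exists 0%N, x; rewrite subn0 mul0r add0r.
Qed.

Lemma mem_hsumsetS_addl h x : ((B + x)%:Z \in hA h.+1) = (x%:Z \in hA h).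
Proof.
apply/idP/idP => /mem_hsumset [j [t [jh tj]]]; rewrite -PoszM -PoszD => -[xE].
  apply/mem_hsumset; case: j xE jh tj => [|j] xE jh tj.
    exists 0%N, x; rewrite subn0 mul0r add0r; split => //.
    by move: tj; rewrite subn0 mulSn; lia.
  by exists j, t; rewrite -PoszM -PoszD; split => //; move: xE; rewrite mulSn; lia.
by apply/mem_hsumset; exists j.+1, t; rewrite -PoszM -PoszD xE mulSn addnA.
Qed.

Lemma card_hsumset h : #|` hA h| = (\sum_(0 <= i < h.+1) minn B (i * m).+1)%N.
Proof.
rewrite card_hsumset_count; elim: h => [|h IH]; first by rewrite big_nat1 mul0n (minn_idPr B_gt0) /= in_fset1.
rewrite mulSn -addnS iotaD count_cat (addnC 0) iotaDl count_map.
rewrite (eq_in_count (a2 := fun x => x <= h.+1 * m)%N); last first.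
  by move=> x; rewrite mem_iota => /andP[_ xB]; apply: mem_hsumsetS_lt.
rewrite (eq_count (a2 := fun x => x%:Z \in hA h)); last by move=> x; apply: mem_hsumsetS_addl.
by rewrite count_leq_iota IH [RHS]big_nat_recr //; apply: addnC.
Qed.

End CountHsumset.

Lemma sum_minn_split (B m q h : nat) :
  (q <= h)%N -> (q * m < B)%N -> (forall i, (q < i <= h)%N -> (B <= i * m)%N) ->
  (\sum_(0 <= i < h.+1) minn B (i * m).+1 =
     \sum_(0 <= i < q.+1) (i * m).+1 + (h - q) * B)%N.
Proof.
move=> qh qmB Bim; rewrite (big_cat_nat _ (n := q.+1)) //; congr addn.
  apply: eq_big_nat => i /andP[_ iq]; apply/minn_idPr.
  by apply: leq_ltn_trans qmB; rewrite leq_mul2r -ltnS iq orbT.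
rewrite -subSS -sum_nat_const_nat.
by apply: eq_big_nat => i iqh; apply/minn_idPl/leqW/Bim.
Qed.

Lemma double_sum_succ_muln (m n : nat) :
  (2 * \sum_(0 <= i < n.+1) (i * m).+1 = n.+1 * (n * m + 2))%N.
Proof.
elim: n => [|n IH]; first by rewrite big_nat1.
by rewrite big_nat_recr //= mulnDr IH; ring.
Qed.

Lemma mulz_subr_inj (m n n' r r' : int) :
  0 < m -> 0 <= r < m -> 0 <= r' < m -> n * m - r = n' * m - r' -> n = n' /\ r = r'.
Proof.
move=> m_gt0 r_bnd r'_bnd E.
have quot (x s : int) : 0 <= s < m -> ((- (x * m - s)) %/ m)%Z = - x.
  move=> s_bnd; rewrite opprB addrC -mulNr divzMDl ?gt_eqF // divz_small ?addr0 //.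
  by rewrite gtz0_abs.
have nn' : n = n' by apply: oppr_inj; rewrite -(quot n r) // E quot.
by split => //; move: E; rewrite nn' => /addrI /oppr_inj.
Qed.

Lemma double_card_hsumset (h m B q : nat) :
  (0 < q <= h)%N -> (q * m < B)%N -> (forall i, (q < i <= h)%N -> (B <= i * m)%N) ->
  (2 * #|` hsumset h (zinterval0 m `|` [fset B%:Z])| =
     q.+1 * (q * m + 2) + 2 * ((h - q) * B))%N.
Proof.
move=> /andP[q_gt0 qh] qmB Bim.
have m_le_B : (m <= B)%N by apply: leq_trans (ltnW qmB); rewrite leq_pmull.
rewrite card_hsumset //; last by apply: leq_ltn_trans qmB.
by rewrite (sum_minn_split qh qmB Bim) mulnDr double_sum_succ_muln.
Qed.

Lemma divn_pred_bounds (B m : nat) :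
  (0 < m)%N -> (0 < B)%N -> (B.-1 %/ m * m < B <= (B.-1 %/ m).+1 * m)%N.
Proof. by move=> m_gt0 B_gt0; have := ltn_ceil B.-1 m_gt0; have := leq_divM B.-1 m; lia. Qed.

Lemma card_hsumset_gt (h m : nat) (b : int) :
  h%:Z * m%:Z < b ->
  #|` hsumset h (zinterval0 m `|` [fset b])|%:Q = (h%:Q + 1) * (1 + h%:Q * m%:R / 2).
Proof.
case: b => [B|n] hmb; last by move: hmb; rewrite NegzE; lia.
have [-> /=|h_gt0] := posnP h; first by rewrite cardfs1; field.
have hmB : (h * m < B)%N by rewrite -ltz_nat PoszM.
have h_bnd : (0 < h <= h)%N by rewrite h_gt0 leqnn.
have no_i i : (h < i <= h)%N -> (B <= i * m)%N by lia.
move: (double_card_hsumset h_bnd hmB no_i) => /(congr1 (fun n => n%:R : rat)).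
rewrite subnn mul0n muln0 addn0 [LHS]natrM => E.
rewrite -!pmulrn -[LHS](mulKf (_ : 2 != 0)) // E natrM natrD natrM mulrSr.
by field.
Qed.

Lemma card_hsumset_mid (h m : nat) (b : int) :
  m%:Z + 1 <= b <= h%:Z * m%:Z ->
  exists i0 r : int,
    [/\ 0 <= i0 <= h%:Z - 2, 0 <= r <= m%:Z - 1,
        b = (h%:Z - i0) * m%:Z - r,
        (forall i0' r' : int, 0 <= i0' <= h%:Z - 2 -> 0 <= r' <= m%:Z - 1 ->
           b = (h%:Z - i0') * m%:Z - r' -> i0' = i0 /\ r' = r) &
        #|` hsumset h (zinterval0 m `|` [fset b])|%:Q =
          (i0%:~R + 1) * b%:~R + (h%:Q - i0%:~R) * (h%:Q * m%:R + 1)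
          - ((h%:Q + i0%:~R + 1) * (h%:Q - i0%:~R) * m%:R) / 2].
Proof.
case: b => [B|n] /andP[mB Bhm]; last by move: mB; rewrite NegzE; lia.
have Bhm' : (B <= h * m)%N by rewrite -lez_nat PoszM.
have m_gt0 : (0 < m)%N by case: m {Bhm} mB Bhm' => [|m] //; rewrite muln0; lia.
pose q := (B.-1 %/ m)%N.
have /andP[qmB Bqm] : (q * m < B <= q.+1 * m)%N by apply: divn_pred_bounds; lia.
have q_gt0 : (0 < q)%N by rewrite divn_gt0 //; lia.
have qh : (q < h)%N by rewrite -(ltn_pmul2r m_gt0); apply: leq_trans qmB Bhm'.
have Bim i : (q < i <= h)%N -> (B <= i * m)%N.
  by case/andP=> qi _; apply: leq_trans Bqm _; rewrite leq_mul2r qi orbT.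
pose i0 := (h - q.+1)%N; pose r := (q.+1 * m - B)%N.
have r_bnd : 0 <= r%:Z < m by move: qmB; rewrite /r mulSn; lia.
have BE : B%:Z = (h%:Z - i0%:Z) * m - r%:Z.
  have -> : h%:Z - i0%:Z = q.+1 by rewrite /i0; lia.
  by rewrite /r; lia.
exists i0, r; split => //; [by rewrite /i0; lia | lia | |].
  move=> i0' r' i0'_bnd r'_bnd E'.
  have r'_lt : 0 <= r' < m by lia.
  by have [] := mulz_subr_inj (m_gt0 : 0 < m%:Z) r_bnd r'_lt (etrans (esym BE) E'); lia.
have q_bnd : (0 < q <= h)%N by rewrite q_gt0 ltnW.
move: (double_card_hsumset q_bnd qmB Bim) => /(congr1 (fun n => n%:R : rat)).
rewrite [LHS]natrM => E; apply: (mulfI (_ : 2 != 0 :> rat)) => //.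
rewrite -!pmulrn E /i0 (natrB _ qh) !(natrD, natrM) (natrB _ (ltnW qh)) -addn1 natrD.
by field.
Qed.

Theorem mainTheorem7 (h k : nat) (b : int) :
  (2 <= h)%N -> (3 <= k)%N ->
  let A := zinterval0 (k - 2) `|` [fset b] in
  let hA := hsumset h A in
  (b > (h%:Z) * (k%:Z - 2) ->
     (#|` hA|%:Q) = (h%:Q + 1) * (1 + (h%:Q * (k%:Q - 2)) / 2)) /\
  (k%:Z - 1 <= b <= (h%:Z) * (k%:Z - 2) ->
     exists i0 r : int,
       [/\ 0 <= i0 <= h%:Z - 2, 0 <= r <= k%:Z - 3,
           b = (h%:Z - i0) * (k%:Z - 2) - r,
           (forall i0' r' : int, 0 <= i0' <= h%:Z - 2 -> 0 <= r' <= k%:Z - 3 ->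
              b = (h%:Z - i0') * (k%:Z - 2) - r' -> i0' = i0 /\ r' = r) &
           (#|` hA|%:Q) =
             (i0%:~R + 1) * b%:~R + (h%:Q - i0%:~R) * (h%:Q * (k%:Q - 2) + 1)
             - ((h%:Q + i0%:~R + 1) * (h%:Q - i0%:~R) * (k%:Q - 2)) / 2]).
Proof.
(* [2 <= h] is not needed: in the second case it follows from the range of [b]. *)
move=> _ k_ge3 A hA; rewrite {}/hA {}/A.
have [m ->] : exists m : nat, k = (m + 2)%N by exists (k - 2)%N; lia.
have -> : (m + 2)%N%:Q - 2 = m%:R by rewrite PoszD intrD addrK.
have -> : (m + 2)%N%:Z - 2 = m by lia.
have -> : (m + 2)%N%:Z - 1 = m%:Z + 1 by lia.
have -> : (m + 2)%N%:Z - 3 = m%:Z - 1 by lia.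
by rewrite addnK; split; [apply: card_hsumset_gt | apply: card_hsumset_mid].
Qed.
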